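(* Let $P$ and $Q$ be continuous $L$-ordered sets. (1) If $Y$ is an $L$-sobrification of $\Sigma_LP$, then $\Omega_LY$ is a directed completion of $P$. (2) If $Q$ is a directed completion of $P$, then $\Sigma_LQ$ is an $L$-sobrification of $\Sigma_LP$. (3) $Q$ is a directed completion of $P$ if and only if $\Sigma_LQ$ is an $L$-sobrification of $\Sigma_LP$.
   Context: $L$ is a frame with implication $\to$. $L$-subsets of $X$ are maps $X\to L$; nonempty means $\bigvee_xA(x)=1$; constants $a_X$; ${\rm sub}_X(A,B)=\bigwedge_xA(x)\to B(x)$; $f^\rightarrow(A)(y)=\bigvee_{f(x)=y}A(x)$, $f^\leftarrow(B)=B\circ f$. An $L$-topology on $X$: $\mathcal O(X)\subseteq L^X$ closed under finite meets and arbitrary joins containing all constants; continuity: $f^\leftarrow$ preserves openness. $T_0$: if $A(x)=A(y)$ for all open $A$ then $x=y$. Specialization $L$-order of a $T_0$ space: $e(x,y)=\bigwedge_{A\in\mathcal O(X)}A(x)\to A(y)$; $\Omega_LX$ is $X$ with this $L$-order. A point of $\mathcal O(X)$ is $p:\mathcal O(X)\to L$ preserving binary meets and arbitrary joins with $p(\lambda_X)=\lambda$; $[x](A)=A(x)$; $X$ is $L$-sober if $x\mapsto[x]$ is a bijection onto the points. An $L$-sobrification of $X$ is an $L$-sober space $Y$ with a continuous $j:X\to Y$ such that every continuous map from $X$ to an $L$-sober space $Z$ factors uniquely as $\bar f\circ j$ with $\bar f:Y\to Z$ continuous. An $L$-order on $P$: $e:P\times P\to L$ reflexive ($e(x,x)=1$),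 transitive ($e(x,y)\wedge e(y,z)\le e(x,z)$), antisymmetric ($e(x,y)\wedge e(y,x)=1\Rightarrow x=y$). ${\downarrow}y(x)=e(x,y)$; $x=\sqcup A$ if $e(x,y)={\rm sub}_P(A,{\downarrow}y)$ for all $y$. Directed: nonempty and $D(x)\wedge D(y)\le\bigvee_zD(z)\wedge e(x,z)\wedge e(y,z)$; ideal = directed lower set. $L$-dcpo: all directed $L$-subsets have suprema. Scott continuous: preserves existing suprema of directed $L$-subsets ($f(\sqcup D)=\sqcup f^\rightarrow(D)$, the latter existing). ${\Downarrow}x(y)=\bigwedge\{e(x,\sqcup I)\to I(y):I\text{ ideal with a supremum}\}$; continuous $L$-ordered set: each ${\Downarrow}x$ directed with supremum $x$; continuous $L$-dcpo: continuous and an $L$-dcpo. Scott $L$-topology $\sigma_L(P)$: upper sets $A$ ($A(x)\wedge e(x,y)\le A(y)$) with $A(\sqcup D)=\bigvee_xA(x)\wedge D(x)$ for every directed $D$ having a supremum; $\Sigma_LP=(P,\sigma_L(P))$. A directed completion of a continuous $L$-ordered set $P$ is a continuous $L$-dcpo $Q$ with a Scott continuous $j:P\to Q$ such that each Scott continuous map from $P$ to a continuous $L$-dcpo $M$ factors uniquely as $\bar f\circ j$ with $\bar f:Q\to M$ Scott continuous. *)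

Set Implicit Arguments.

Record frame := Frame {
  fcar :> Type;
  fle : fcar -> fcar -> Prop;
  fle_refl : forall a, fle a a;
  fle_trans : forall a b c, fle a b -> fle b c -> fle a c;
  fle_antisym : forall a b, fle a b -> fle b a -> a = b;
  fjoin : (fcar -> Prop) -> fcar;
  fjoin_ub : forall S a, S a -> fle a (fjoin S);
  fjoin_least : forall S b, (forall a, S a -> fle a b) -> fle (fjoin S) b;
  fmeet : fcar -> fcar -> fcar;
  fmeet_l : forall a b, fle (fmeet a b) a;
  fmeet_r : forall a b, fle (fmeet a b) b;
  fmeet_glb : forall a b c, fle c a -> fle c b -> fle c (fmeet a b);
  fimp : fcar -> fcar -> fcar;
  fimp_adj : forall a b c, fle c (fimp a b) <-> fle (fmeet c a) b
}.
(* A complete lattice whose binary meet has a right adjoint is exactly a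
   frame equipped with its (Heyting) implication. *)

Arguments fle {f}.
Arguments fjoin {f}.
Arguments fmeet {f}.
Arguments fimp {f}.

Section FrameOps.
Variable L : frame.

Definition ftop : L := fjoin (fun _ : L => True).

Definition bigjoin (I : Type) (f : I -> L) : L :=
  fjoin (fun a => exists i, a = f i).
Definition bigmeet (I : Type) (f : I -> L) : L :=
  fjoin (fun a => forall i, fle a (f i)).
End FrameOps.

Arguments ftop {L}.
Arguments bigjoin {L I}.
Arguments bigmeet {L I}.

Section LSubsets.
Context {L : frame}.

Definition Lnonempty (X : Type) (A : X -> L) : Prop := bigjoin A = ftop.
Definition Lconst (X : Type) (a : L) : X -> L := fun _ => a.
Definition Lsub (X : Type) (A B : X -> L) : L :=
  bigmeet (fun x => fimp (A x) (B x)).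
Definition Limage (X Y : Type) (f : X -> Y) (A : X -> L) : Y -> L :=
  fun y => bigjoin (fun x : {x : X | f x = y} => A (proj1_sig x)).
Definition Lpreimage (X Y : Type) (f : X -> Y) (B : Y -> L) : X -> L :=
  fun x => B (f x).

Definition is_Ltop (X : Type) (O : (X -> L) -> Prop) : Prop :=
  (forall a : L, O (@Lconst X a)) /\
  (forall A B, O A -> O B -> O (fun x => fmeet (A x) (B x))) /\
  (forall S : (X -> L) -> Prop, (forall A, S A -> O A) ->
     O (fun x => bigjoin (fun A : {A | S A} => proj1_sig A x))).

Definition Lcontinuous (X Y : Type) (OX : (X -> L) -> Prop)
  (OY : (Y -> L) -> Prop) (f : X -> Y) : Prop :=
  forall B, OY B -> OX (Lpreimage f B).

Definition T0 (X : Type) (O : (X -> L) -> Prop) : Prop :=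
  forall x y, (forall A, O A -> A x = A y) -> x = y.

Definition spec (X : Type) (O : (X -> L) -> Prop) : X -> X -> L :=
  fun x y => bigmeet (fun A : {A | O A} => fimp (proj1_sig A x) (proj1_sig A y)).

(** points of O(X): maps O(X) -> L (represented as functions on all L-subsets,
    only their values on open sets matter) preserving binary meets and
    arbitrary joins of opens and sending the constant lambda_X to lambda. *)
Definition is_point (X : Type) (O : (X -> L) -> Prop) (p : (X -> L) -> L) : Prop :=
  (forall A B, O A -> O B -> p (fun x => fmeet (A x) (B x)) = fmeet (p A) (p B)) /\
  (forall S : (X -> L) -> Prop, (forall A, S A -> O A) ->
     p (fun x => bigjoin (fun A : {A | S A} => proj1_sig A x))
     = bigjoin (fun A : {A | S A} => p (proj1_sig A))) /\
  (forall a : L, p (@Lconst X a) = a).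

(** L-sober: x |-> [x] is a bijection onto the points
    (injective, and every point is some [x] on the open sets). *)
Definition Lsober (X : Type) (O : (X -> L) -> Prop) : Prop :=
  (forall x y, (forall A, O A -> A x = A y) -> x = y) /\
  (forall p, is_point O p -> exists x, forall A, O A -> p A = A x).

Definition is_Lsobrification (X Y : Type) (OX : (X -> L) -> Prop)
  (OY : (Y -> L) -> Prop) (j : X -> Y) : Prop :=
  is_Ltop OY /\ Lsober OY /\ Lcontinuous OX OY j /\
  forall (Z : Type) (OZ : (Z -> L) -> Prop), is_Ltop OZ -> Lsober OZ ->
  forall f : X -> Z, Lcontinuous OX OZ f ->
  exists fb : Y -> Z, Lcontinuous OY OZ fb /\ (forall x, fb (j x) = f x) /\
    (forall g : Y -> Z, Lcontinuous OY OZ g -> (forall x, g (j x) = f x) ->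
       forall y, g y = fb y).

Definition is_Lorder (P : Type) (e : P -> P -> L) : Prop :=
  (forall x, e x x = ftop) /\
  (forall x y z, fle (fmeet (e x y) (e y z)) (e x z)) /\
  (forall x y, fmeet (e x y) (e y x) = ftop -> x = y).

Definition Ldown (P : Type) (e : P -> P -> L) (y : P) : P -> L := fun x => e x y.

Definition is_sup (P : Type) (e : P -> P -> L) (A : P -> L) (x : P) : Prop :=
  forall y, e x y = Lsub A (Ldown e y).

Definition Ldirected (P : Type) (e : P -> P -> L) (D : P -> L) : Prop :=
  Lnonempty D /\
  forall x y, fle (fmeet (D x) (D y))
                  (bigjoin (fun z => fmeet (D z) (fmeet (e x z) (e y z)))).

Definition Lupper (P : Type) (e : P -> P -> L) (A : P -> L) : Prop :=
  forall x y, fle (fmeet (A x) (e x y)) (A y).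
Definition Llower (P : Type) (e : P -> P -> L) (A : P -> L) : Prop :=
  forall x y, fle (fmeet (A y) (e x y)) (A x).

Definition Lideal (P : Type) (e : P -> P -> L) (I : P -> L) : Prop :=
  Ldirected e I /\ Llower e I.

Definition Ldcpo (P : Type) (e : P -> P -> L) : Prop :=
  forall D, Ldirected e D -> exists x, is_sup e D x.

Definition Scott_continuous (P M : Type) (eP : P -> P -> L) (eM : M -> M -> L)
  (f : P -> M) : Prop :=
  forall D x, Ldirected eP D -> is_sup eP D x -> is_sup eM (Limage f D) (f x).

(** way-below: wayb x y = (Downarrow x)(y), the meet over all ideals I having
    a supremum s of  e(x, s) -> I(y). *)
Definition wayb (P : Type) (e : P -> P -> L) (x : P) : P -> L :=
  fun y => bigmeet (fun Is : {Is : (P -> L) * P | Lideal e (fst Is) /\ is_sup e (fst Is) (snd Is)} =>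
                      fimp (e x (snd (proj1_sig Is))) (fst (proj1_sig Is) y)).

Definition Lcontinuous_ordered (P : Type) (e : P -> P -> L) : Prop :=
  forall x, Ldirected e (wayb e x) /\ is_sup e (wayb e x) x.

Definition Lcontinuous_dcpo (P : Type) (e : P -> P -> L) : Prop :=
  Lcontinuous_ordered e /\ Ldcpo e.

Definition Scott_open (P : Type) (e : P -> P -> L) (A : P -> L) : Prop :=
  Lupper e A /\
  forall D s, Ldirected e D -> is_sup e D s ->
    A s = bigjoin (fun x => fmeet (A x) (D x)).

Definition is_directed_completion (P Q : Type) (eP : P -> P -> L)
  (eQ : Q -> Q -> L) (j : P -> Q) : Prop :=
  is_Lorder eQ /\ Lcontinuous_dcpo eQ /\ Scott_continuous eP eQ j /\
  forall (M : Type) (eM : M -> M -> L), is_Lorder eM -> Lcontinuous_dcpo eM ->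
  forall f : P -> M, Scott_continuous eP eM f ->
  exists fb : Q -> M, Scott_continuous eQ eM fb /\ (forall x, fb (j x) = f x) /\
    (forall g : Q -> M, Scott_continuous eQ eM g -> (forall x, g (j x) = f x) ->
       forall y, g y = fb y).
End LSubsets.

(* Directed completions and L-sobrifications are defined by universal properties, so each is
   unique up to isomorphism, and it suffices to exhibit one object that is both.  Take the round
   ideals of P, i.e. ideals I with I(x) <= \/_y I(y) /\ ⇓y(x), ordered by inclusion and
   receiving P through x |-> ⇓x.  Directed suprema of round ideals are pointwise joins and the ⇓x
   approximate them, so they form a continuous L-dcpo; a Scott continuous map f into a continuous
   L-dcpo extends by sending I to the supremum of f[I], and a continuous map f into a sober space
   extends by sending I to the point C |-> \/_x I(x) /\ C(f x).  Since the specialization order of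
   the Scott topology of a continuous L-ordered set is its own order, the isomorphisms with this
   model transport both universal properties, giving (1) and (2); (3) follows by applying (1) to
   the Scott topology of Q. *)

From Stdlib Require Import FunctionalExtensionality ProofIrrelevance ClassicalEpsilon.

Local Notation "a ⊑ b" := (fle a b) (at level 70).
Local Notation "a ⊓ b" := (fmeet a b) (at level 40, left associativity).
Local Notation "a ⇒ b" := (fimp a b) (at level 55, right associativity).

Section FrameTheory.
Context {L : frame}.
Implicit Types a b c d : L.

Lemma ftop_max a : a ⊑ ftop.
Proof. apply fjoin_ub. exact I. Qed.

Lemma ftop_eq a : ftop ⊑ a -> a = ftop.
Proof. intro H. apply fle_antisym; [apply ftop_max | exact H]. Qed.

Lemma fmeet_mono a b c d : a ⊑ c -> b ⊑ d -> a ⊓ b ⊑ c ⊓ d.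
Proof.
  intros Hac Hbd. apply fmeet_glb.
  - eapply fle_trans; [apply fmeet_l | exact Hac].
  - eapply fle_trans; [apply fmeet_r | exact Hbd].
Qed.

Lemma fmeetC a b : a ⊓ b = b ⊓ a.
Proof. apply fle_antisym; apply fmeet_glb; apply fmeet_r || apply fmeet_l. Qed.

Lemma fmeet_top_r a : a ⊓ ftop = a.
Proof.
  apply fle_antisym; [apply fmeet_l |]. apply fmeet_glb; [apply fle_refl | apply ftop_max].
Qed.

Lemma fmeet_top_l a : ftop ⊓ a = a.
Proof. rewrite fmeetC. apply fmeet_top_r. Qed.

Lemma fimp_intro a b c : c ⊓ a ⊑ b -> c ⊑ a ⇒ b.
Proof. apply fimp_adj. Qed.

Lemma fimp_apply a b c : c ⊑ a ⇒ b -> c ⊑ a -> c ⊑ b.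
Proof.
  intros Hab Ha. apply fimp_adj in Hab. eapply fle_trans; [| exact Hab].
  apply fmeet_glb; [apply fle_refl | exact Ha].
Qed.

Lemma fimp_top_l b : (ftop ⇒ b) ⊑ b.
Proof. apply (fimp_apply ftop); [apply fle_refl | apply ftop_max]. Qed.

Lemma bigjoin_ub {I : Type} (f : I -> L) i : f i ⊑ bigjoin f.
Proof. apply fjoin_ub. exists i. reflexivity. Qed.

Lemma bigjoin_least {I : Type} (f : I -> L) b : (forall i, f i ⊑ b) -> bigjoin f ⊑ b.
Proof. intro H. apply fjoin_least. intros a [i ->]. apply H. Qed.

Lemma le_bigjoin {I : Type} (f : I -> L) a i : a ⊑ f i -> a ⊑ bigjoin f.
Proof. intro H. eapply fle_trans; [exact H | apply bigjoin_ub]. Qed.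

Lemma bigjoin_le_bigjoin {I J : Type} (f : I -> L) (g : J -> L) :
  (forall i, exists j, f i ⊑ g j) -> bigjoin f ⊑ bigjoin g.
Proof.
  intro H. apply bigjoin_least. intro i. destruct (H i) as [j Hj]. exact (le_bigjoin g _ j Hj).
Qed.

Lemma bigjoin_mono {I : Type} (f g : I -> L) : (forall i, f i ⊑ g i) -> bigjoin f ⊑ bigjoin g.
Proof. intro H. apply bigjoin_le_bigjoin. intro i. exists i. apply H. Qed.

Lemma bigmeet_lb {I : Type} (f : I -> L) i : bigmeet f ⊑ f i.
Proof. apply fjoin_least. intros a H. apply H. Qed.

Lemma bigmeet_glb {I : Type} (f : I -> L) c : (forall i, c ⊑ f i) -> c ⊑ bigmeet f.
Proof. intro H. apply fjoin_ub. exact H. Qed.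

Lemma bigmeet_le {I : Type} (f : I -> L) a i : f i ⊑ a -> bigmeet f ⊑ a.
Proof. intro H. eapply fle_trans; [apply bigmeet_lb | exact H]. Qed.

Lemma bigmeet_le_bigmeet {I J : Type} (f : I -> L) (g : J -> L) :
  (forall j, exists i, f i ⊑ g j) -> bigmeet f ⊑ bigmeet g.
Proof.
  intro H. apply bigmeet_glb. intro j. destruct (H j) as [i Hi]. exact (bigmeet_le f _ i Hi).
Qed.

(* Frame distributivity, from the adjunction between meet and implication. *)
Lemma bigjoin_fmeet_le {I : Type} (f : I -> L) c d :
  (forall i, f i ⊓ c ⊑ d) -> bigjoin f ⊓ c ⊑ d.
Proof.
  intro H. apply fimp_adj. apply bigjoin_least. intro i. apply fimp_intro, H.
Qed.

Lemma fmeet_bigjoin_le {I : Type} (f : I -> L) c d :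
  (forall i, c ⊓ f i ⊑ d) -> c ⊓ bigjoin f ⊑ d.
Proof.
  intro H. rewrite fmeetC. apply bigjoin_fmeet_le. intro i. rewrite fmeetC. apply H.
Qed.

Lemma bigjoin_reindex {I J : Type} (k : J -> I) (f : I -> L) :
  (forall i, exists j, k j = i) -> bigjoin f = bigjoin (fun j => f (k j)).
Proof.
  intro Hk. apply fle_antisym; apply bigjoin_le_bigjoin.
  - intro i. destruct (Hk i) as [j <-]. exists j. apply fle_refl.
  - intro j. exists (k j). apply fle_refl.
Qed.

Lemma bigmeet_reindex {I J : Type} (k : J -> I) (f : I -> L) :
  (forall i, exists j, k j = i) -> bigmeet f = bigmeet (fun j => f (k j)).
Proof.
  intro Hk. apply fle_antisym; apply bigmeet_le_bigmeet.
  - intro j. exists (k j). apply fle_refl.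
  - intro i. destruct (Hk i) as [j <-]. exists j. apply fle_refl.
Qed.

Lemma Lsub_intro {X : Type} (A B : X -> L) c : (forall x, c ⊓ A x ⊑ B x) -> c ⊑ Lsub A B.
Proof. intro H. apply bigmeet_glb. intro x. apply fimp_intro, H. Qed.

Lemma Lsub_apply {X : Type} (A B : X -> L) x c : c ⊑ Lsub A B -> c ⊑ A x -> c ⊑ B x.
Proof.
  intro H. apply fimp_apply. eapply fle_trans; [exact H |].
  exact (bigmeet_lb (fun x => A x ⇒ B x) x).
Qed.

End FrameTheory.

Ltac meet_proj := first [ apply fle_refl | apply ftop_max
  | eapply fle_trans; [apply fmeet_l |]; meet_proj
  | eapply fle_trans; [apply fmeet_r |]; meet_proj ].
Ltac lattice := repeat apply fmeet_glb; meet_proj.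

Section LOrders.
Context {L : frame} {P : Type} (e : P -> P -> L).

Lemma directed_elim D x y (c d : L) : Ldirected e D -> c ⊑ D x -> c ⊑ D y ->
  (forall z, c ⊓ (D z ⊓ (e x z ⊓ e y z)) ⊑ d) -> c ⊑ d.
Proof.
  intros [_ Hd] Hx Hy H.
  apply fle_trans with (c ⊓ bigjoin (fun z => D z ⊓ (e x z ⊓ e y z))).
  - apply fmeet_glb; [apply fle_refl |].
    eapply fle_trans; [| apply Hd]. apply fmeet_glb; assumption.
  - apply fmeet_bigjoin_le. exact H.
Qed.

Hypothesis He : is_Lorder e.

Lemma ord_refl x : e x x = ftop.
Proof. apply He. Qed.

Lemma ord_trans x y z (c : L) : c ⊑ e x y -> c ⊑ e y z -> c ⊑ e x z.
Proof.
  intros Hxy Hyz. eapply fle_trans; [| exact (proj1 (proj2 He) x y z)].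
  apply fmeet_glb; assumption.
Qed.

Lemma sup_unique D s s' : is_sup e D s -> is_sup e D s' -> s = s'.
Proof.
  intros Hs Hs'. apply He.
  rewrite (Hs s'), <- (Hs' s'), (Hs' s), <- (Hs s), !ord_refl. apply fmeet_top_r.
Qed.

Lemma sup_ub D s x : is_sup e D s -> D x ⊑ e x s.
Proof.
  intro Hs. apply (Lsub_apply D (Ldown e s)); [| apply fle_refl].
  rewrite <- Hs, ord_refl. apply ftop_max.
Qed.

Lemma down_ideal y : Lideal e (Ldown e y).
Proof.
  unfold Ldown. split; [split |].
  - apply ftop_eq. apply (le_bigjoin _ _ y). rewrite ord_refl. apply fle_refl.
  - intros a b. apply (le_bigjoin _ _ y). rewrite ord_refl. lattice.
  - intros a b. rewrite fmeetC. apply He.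
Qed.

Lemma down_sup y : is_sup e (Ldown e y) y.
Proof.
  intro w. apply fle_antisym.
  - apply Lsub_intro. intro x. unfold Ldown. rewrite fmeetC. apply He.
  - apply (bigmeet_le _ _ y). unfold Ldown. rewrite ord_refl. apply fimp_top_l.
Qed.

Definition lower_closure (D : P -> L) : P -> L := fun y => bigjoin (fun x => D x ⊓ e y x).

Lemma le_lower_closure D z : D z ⊑ lower_closure D z.
Proof. apply (le_bigjoin _ _ z). rewrite ord_refl, fmeet_top_r. apply fle_refl. Qed.

Lemma lower_closure_ideal D : Ldirected e D -> Lideal e (lower_closure D).
Proof.
  intros HD. split; [split |].
  - apply ftop_eq. rewrite <- (proj1 HD). apply bigjoin_mono, le_lower_closure.
  - intros a b. unfold lower_closure at 1 2.
    apply bigjoin_fmeet_le. intro x1. apply fmeet_bigjoin_le. intro x2.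
    apply (directed_elim D x1 x2); [exact HD | lattice | lattice |]. intro z.
    apply (le_bigjoin _ _ z). apply fmeet_glb.
    + eapply fle_trans; [| apply le_lower_closure]. lattice.
    + apply fmeet_glb; eapply ord_trans; lattice.
  - intros x y. unfold lower_closure. apply bigjoin_fmeet_le. intro z. apply (le_bigjoin _ _ z).
    apply fmeet_glb; [lattice | eapply ord_trans; lattice].
Qed.

Lemma lower_closure_sup D s : is_sup e D s -> is_sup e (lower_closure D) s.
Proof.
  intros Hs w. rewrite Hs. apply fle_antisym.
  - apply Lsub_intro. intro y. apply fmeet_bigjoin_le. intro x. unfold Ldown.
    apply (ord_trans y x w); [lattice |]. apply (Lsub_apply D (Ldown e w)); lattice.
  - apply Lsub_intro. intro x. apply (Lsub_apply (lower_closure D)); [lattice |].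
    eapply fle_trans; [apply fmeet_r | apply le_lower_closure].
Qed.

End LOrders.

Section Images.
Context {L : frame} {X Y : Type}.

Lemma Limage_ge (f : X -> Y) (D : X -> L) x : D x ⊑ Limage f D (f x).
Proof. apply (bigjoin_ub (fun x' : {x' | f x' = f x} => D (proj1_sig x')) (exist _ x eq_refl)). Qed.

Lemma Limage_fmeet_le (f : X -> Y) (D : X -> L) y (c d : L) :
  (forall x, f x = y -> D x ⊓ c ⊑ d) -> Limage f D y ⊓ c ⊑ d.
Proof. intro H. apply bigjoin_fmeet_le. intros [x Hx]. exact (H x Hx). Qed.

Lemma Lsub_Limage (f : X -> Y) (D : X -> L) (A : Y -> L) :
  Lsub (Limage f D) A = bigmeet (fun x => D x ⇒ A (f x)).
Proof.
  apply fle_antisym.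
  - apply bigmeet_glb. intro x. apply fimp_intro.
    apply (Lsub_apply (Limage f D)); [lattice |].
    eapply fle_trans; [apply fmeet_r | apply Limage_ge].
  - apply Lsub_intro. intro y. rewrite fmeetC. apply Limage_fmeet_le. intros x <-.
    apply (fimp_apply (D x)); [| lattice].
    eapply fle_trans; [apply fmeet_r | exact (bigmeet_lb (fun x => D x ⇒ A (f x)) x)].
Qed.

Lemma is_sup_Limage (eY : Y -> Y -> L) (f : X -> Y) (D : X -> L) s :
  is_sup eY (Limage f D) s <-> forall m, eY s m = bigmeet (fun x => D x ⇒ eY (f x) m).
Proof. unfold is_sup. setoid_rewrite Lsub_Limage. reflexivity. Qed.

Lemma bigjoin_Limage (f : X -> Y) (D : X -> L) (B : Y -> L) :
  bigjoin (fun y => B y ⊓ Limage f D y) = bigjoin (fun x => B (f x) ⊓ D x).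
Proof.
  apply fle_antisym.
  - apply bigjoin_least. intro y. rewrite fmeetC. apply Limage_fmeet_le. intros x <-.
    rewrite fmeetC. apply (bigjoin_ub (fun x => B (f x) ⊓ D x)).
  - apply bigjoin_least. intro x. apply (le_bigjoin _ _ (f x)).
    apply fmeet_mono; [apply fle_refl | apply Limage_ge].
Qed.

Lemma Limage_directed (eX : X -> X -> L) (eY : Y -> Y -> L) (f : X -> Y) D :
  (forall x x', eX x x' ⊑ eY (f x) (f x')) -> Ldirected eX D -> Ldirected eY (Limage f D).
Proof.
  intros Hf HD. split.
  - apply ftop_eq. rewrite <- (proj1 HD). apply bigjoin_le_bigjoin. intro x.
    exists (f x). apply Limage_ge.
  - intros a b. apply Limage_fmeet_le. intros x1 <-. rewrite fmeetC.
    apply Limage_fmeet_le. intros x2 <-. rewrite fmeetC.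
    apply (directed_elim eX D x1 x2); [exact HD | lattice | lattice |]. intro z.
    apply (le_bigjoin _ _ (f z)). apply fmeet_glb; [| apply fmeet_glb].
    + eapply fle_trans; [| apply Limage_ge]. lattice.
    + eapply fle_trans; [| apply Hf]. lattice.
    + eapply fle_trans; [| apply Hf]. lattice.
Qed.

End Images.

Lemma is_sup_Limage_comp {L : frame} {X Y Z : Type} (eZ : Z -> Z -> L) (f : X -> Y) (g : Y -> Z)
  (D : X -> L) s :
  is_sup eZ (Limage g (Limage f D)) s -> is_sup eZ (Limage (fun x => g (f x)) D) s.
Proof.
  rewrite !is_sup_Limage. intros Hs m. rewrite Hs.
  exact (Lsub_Limage f D (fun y => eZ (g y) m)).
Qed.

Section ScottContinuity.
Context {L : frame}.

Lemma Scott_continuous_mono {X Y : Type} (eX : X -> X -> L) (eY : Y -> Y -> L) (f : X -> Y) :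
  is_Lorder eX -> is_Lorder eY -> Scott_continuous eX eY f ->
  forall x y, eX x y ⊑ eY (f x) (f y).
Proof.
  intros HX HY Hf x y.
  pose proof (Hf _ _ (proj1 (down_ideal eX HX y)) (down_sup eX HX y)) as Hsup.
  eapply fle_trans; [apply (Limage_ge f (Ldown eX y) x) | exact (sup_ub eY HY _ _ _ Hsup)].
Qed.

Lemma Scott_continuous_comp {X Y Z : Type} (eX : X -> X -> L) (eY : Y -> Y -> L)
  (eZ : Z -> Z -> L) (f : X -> Y) (g : Y -> Z) :
  is_Lorder eX -> is_Lorder eY ->
  Scott_continuous eX eY f -> Scott_continuous eY eZ g -> Scott_continuous eX eZ (fun x => g (f x)).
Proof.
  intros HX HY Hf Hg D x HD Hx. apply is_sup_Limage_comp.
  exact (Hg _ _ (Limage_directed eX eY f D (Scott_continuous_mono eX eY f HX HY Hf) HD)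
           (Hf D x HD Hx)).
Qed.

Lemma Scott_continuous_id {X : Type} (eX : X -> X -> L) : Scott_continuous eX eX (fun x => x).
Proof. intros D x _ Hx. apply is_sup_Limage. exact Hx. Qed.

End ScottContinuity.

Section WayBelow.
Context {L : frame} {P : Type} (e : P -> P -> L).
Hypothesis He : is_Lorder e.

Lemma wayb_elim I s x y : Lideal e I -> is_sup e I s -> wayb e x y ⊓ e x s ⊑ I y.
Proof.
  intros HI Hs. apply fimp_adj.
  exact (bigmeet_lb
           (fun Is : {Is : (P -> L) * P | Lideal e (fst Is) /\ is_sup e (fst Is) (snd Is)} =>
           e x (snd (proj1_sig Is)) ⇒ fst (proj1_sig Is) y) (exist _ (I, s) (conj HI Hs))).
Qed.

Lemma wayb_intro (c : L) x y :
  (forall I s, Lideal e I -> is_sup e I s -> c ⊓ e x s ⊑ I y) -> c ⊑ wayb e x y.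
Proof. intro H. apply bigmeet_glb. intros [[I s] [HI Hs]]. apply fimp_intro, H; assumption. Qed.

Lemma wayb_le_ideal I x y : Lideal e I -> is_sup e I x -> wayb e x y ⊑ I y.
Proof.
  intros HI Hx. eapply fle_trans; [| exact (wayb_elim I x x y HI Hx)].
  rewrite (ord_refl e He), fmeet_top_r. apply fle_refl.
Qed.

Lemma wayb_le x y : wayb e x y ⊑ e y x.
Proof. apply (wayb_le_ideal (Ldown e x)); [apply down_ideal | apply down_sup]; exact He. Qed.

Lemma wayb_lower x y z : wayb e x y ⊓ e z y ⊑ wayb e x z.
Proof.
  apply wayb_intro. intros I s HI Hs. eapply fle_trans; [| apply (proj2 HI z y)].
  apply fmeet_glb; [| lattice]. eapply fle_trans; [| apply (wayb_elim I s x y HI Hs)]. lattice.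
Qed.

Lemma wayb_upper x y w : wayb e x y ⊓ e x w ⊑ wayb e w y.
Proof.
  apply wayb_intro. intros I s HI Hs. eapply fle_trans; [| apply (wayb_elim I s x y HI Hs)].
  apply fmeet_glb; [lattice | apply (ord_trans e He x w s); lattice].
Qed.

(* An approximating family contained in the way-below relation generates it by lower closure. *)
Lemma continuous_of_approx (W : P -> P -> L) :
  (forall q y, W q y ⊑ wayb e q y) -> (forall q, Ldirected e (W q)) ->
  (forall q, is_sup e (W q) q) -> Lcontinuous_ordered e.
Proof.
  intros HW Hdir Hsup q.
  assert (E : wayb e q = lower_closure e (W q)).
  { apply functional_extensionality. intro y. apply fle_antisym.
    - apply wayb_le_ideal; [apply lower_closure_ideal | apply lower_closure_sup]; auto.
    - apply bigjoin_least. intro x. eapply fle_trans; [| apply (wayb_lower q x y)].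
      apply fmeet_mono; [apply HW | apply fle_refl]. }
  rewrite E. split; [apply lower_closure_ideal | apply lower_closure_sup]; auto.
Qed.

Hypothesis Hc : Lcontinuous_ordered e.

Definition interpolant (x : P) : P -> L := fun y => bigjoin (fun z => wayb e x z ⊓ wayb e z y).

Lemma interpolant_ideal x : Lideal e (interpolant x).
Proof.
  split; [split |].
  - apply ftop_eq. rewrite <- (proj1 (proj1 (Hc x))). apply bigjoin_least. intro z.
    rewrite <- (fmeet_top_r (wayb e x z)), <- (proj1 (proj1 (Hc z))).
    apply fmeet_bigjoin_le. intro y. apply (le_bigjoin _ _ y), (le_bigjoin _ _ z), fle_refl.
  - intros a b. apply bigjoin_fmeet_le. intro z1. apply fmeet_bigjoin_le. intro z2.
    apply (directed_elim e (wayb e x) z1 z2); [apply Hc | lattice | lattice |]. intro w.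
    apply (directed_elim e (wayb e w) a b); [apply Hc | | |].
    + eapply fle_trans; [| apply (wayb_upper z1 a w)]. lattice.
    + eapply fle_trans; [| apply (wayb_upper z2 b w)]. lattice.
    + intro v. apply (le_bigjoin _ _ v). apply fmeet_glb; [| lattice].
      apply (le_bigjoin _ _ w). lattice.
  - intros a y. apply bigjoin_fmeet_le. intro z. apply (le_bigjoin _ _ z).
    apply fmeet_glb; [lattice |]. eapply fle_trans; [| apply (wayb_lower z y a)]. lattice.
Qed.

Lemma interpolant_sup x : is_sup e (interpolant x) x.
Proof.
  intro w. apply fle_antisym.
  - apply Lsub_intro. intro y. apply fmeet_bigjoin_le. intro z. unfold Ldown.
    apply (ord_trans e He y z w); [eapply fle_trans; [| apply wayb_le]; lattice |].
    apply (ord_trans e He z x w); [eapply fle_trans; [| apply wayb_le] |]; lattice.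
  - rewrite (proj2 (Hc x) w). apply Lsub_intro. intro z. unfold Ldown.
    rewrite (proj2 (Hc z) w). apply Lsub_intro. intro y.
    apply (Lsub_apply (interpolant x)); [lattice |]. apply (le_bigjoin _ _ z). lattice.
Qed.

Lemma wayb_interpolation x y : wayb e x y ⊑ bigjoin (fun z => wayb e x z ⊓ wayb e z y).
Proof.
  apply (wayb_le_ideal (interpolant x)); [apply interpolant_ideal | apply interpolant_sup].
Qed.

Lemma wayb_Scott_open u : Scott_open e (fun z => wayb e z u).
Proof.
  split; [intros x y; apply wayb_upper |].
  intros D s HD Hs. apply fle_antisym.
  - eapply fle_trans; [apply wayb_interpolation |]. apply bigjoin_least. intro z.
    eapply fle_trans.
    { apply fmeet_mono; [| apply fle_refl].
      apply (wayb_le_ideal (lower_closure e D));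
        [apply lower_closure_ideal | apply lower_closure_sup]; assumption. }
    apply bigjoin_fmeet_le. intro x. apply (le_bigjoin _ _ x). apply fmeet_glb; [| lattice].
    eapply fle_trans; [| apply (wayb_upper z u x)]. lattice.
  - apply bigjoin_least. intro x. eapply fle_trans; [| apply (wayb_upper x u s)].
    apply fmeet_mono; [apply fle_refl | exact (sup_ub e He D s x Hs)].
Qed.

Lemma Scott_open_wayb_approx A z : Scott_open e A -> A z = bigjoin (fun u => A u ⊓ wayb e z u).
Proof. intro HA. apply (proj2 HA); apply Hc. Qed.

End WayBelow.

Section LTopology.
Context {L : frame} {X : Type} (O : (X -> L) -> Prop).

Lemma bigjoin_family {I : Type} (F : I -> X -> L) :
  (fun x => bigjoin (fun A : {A | exists i, A = F i} => proj1_sig A x))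
  = (fun x => bigjoin (fun i => F i x)).
Proof.
  apply functional_extensionality. intro x. apply fle_antisym; apply bigjoin_le_bigjoin.
  - intros [A [i ->]]. exists i. apply fle_refl.
  - intro i. exists (exist (fun A => exists i, A = F i) (F i) (ex_intro _ i eq_refl)).
    apply fle_refl.
Qed.

Hypothesis HO : is_Ltop O.

Lemma Ltop_meet_const A c : O A -> O (fun x => A x ⊓ c).
Proof. intro H. exact (proj1 (proj2 HO) A (Lconst c) H (proj1 HO c)). Qed.

Variable p : (X -> L) -> L.
Hypothesis Hp : is_point O p.

Lemma point_bigjoin {I : Type} (F : I -> X -> L) : (forall i, O (F i)) ->
  p (fun x => bigjoin (fun i => F i x)) = bigjoin (fun i => p (F i)).
Proof.
  intro H. rewrite <- bigjoin_family, (proj1 (proj2 Hp)).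
  - apply fle_antisym; apply bigjoin_le_bigjoin.
    + intros [A [i ->]]. exists i. apply fle_refl.
    + intro i. exists (exist (fun A => exists i, A = F i) (F i) (ex_intro _ i eq_refl)).
      apply fle_refl.
  - intros A [i ->]. apply H.
Qed.

Lemma point_meet_const A c : O A -> p (fun x => A x ⊓ c) = p A ⊓ c.
Proof.
  intro H. transitivity (p A ⊓ p (Lconst c)); [exact (proj1 Hp A (Lconst c) H (proj1 HO c)) |].
  rewrite (proj2 (proj2 Hp) c). reflexivity.
Qed.

End LTopology.

Section ScottTopology.
Context {L : frame} {P : Type} (e : P -> P -> L).
Hypothesis He : is_Lorder e.

Lemma Scott_open_intro A : Lupper e A ->
  (forall D s, Ldirected e D -> is_sup e D s -> A s ⊑ bigjoin (fun x => A x ⊓ D x)) ->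
  Scott_open e A.
Proof.
  intros Hup H. split; [exact Hup |]. intros D s HD Hs. apply fle_antisym; [auto |].
  apply bigjoin_least. intro x. eapply fle_trans; [| apply (Hup x s)].
  apply fmeet_mono; [apply fle_refl | exact (sup_ub e He D s x Hs)].
Qed.

Lemma Scott_open_const a : Scott_open e (Lconst a).
Proof.
  apply Scott_open_intro; [intros x y; apply fmeet_l |].
  intros D s [HD _] _. unfold Lconst. rewrite <- (fmeet_top_r a) at 1. rewrite <- HD.
  apply fmeet_bigjoin_le. intro x. apply (le_bigjoin _ _ x), fle_refl.
Qed.

Lemma Scott_open_meet A B :
  Scott_open e A -> Scott_open e B -> Scott_open e (fun x => A x ⊓ B x).
Proof.
  intros HA HB. apply Scott_open_intro.
  - intros x y. apply fmeet_glb.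
    + eapply fle_trans; [| apply (proj1 HA x y)]. lattice.
    + eapply fle_trans; [| apply (proj1 HB x y)]. lattice.
  - intros D s HD Hs. rewrite (proj2 HA D s HD Hs), (proj2 HB D s HD Hs).
    apply bigjoin_fmeet_le. intro x. apply fmeet_bigjoin_le. intro y.
    apply (directed_elim e D x y); [exact HD | lattice | lattice |]. intro z.
    apply (le_bigjoin _ _ z). apply fmeet_glb; [apply fmeet_glb |].
    + eapply fle_trans; [| apply (proj1 HA x z)]. lattice.
    + eapply fle_trans; [| apply (proj1 HB y z)]. lattice.
    + lattice.
Qed.

Lemma Scott_open_bigjoin (S : (P -> L) -> Prop) : (forall A, S A -> Scott_open e A) ->
  Scott_open e (fun x => bigjoin (fun A : {A | S A} => proj1_sig A x)).
Proof.
  intro HS. apply Scott_open_intro.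
  - intros x y. apply bigjoin_fmeet_le. intros [A HA]. apply (le_bigjoin _ _ (exist _ A HA)).
    apply (proj1 (HS A HA)).
  - intros D s HD Hs. apply bigjoin_least. intros [A HA]. simpl.
    rewrite (proj2 (HS A HA) D s HD Hs). apply bigjoin_mono. intro x.
    apply fmeet_mono; [| apply fle_refl]. apply (le_bigjoin _ _ (exist _ A HA)), fle_refl.
Qed.

Lemma Scott_Ltop : is_Ltop (Scott_open e).
Proof.
  split; [| split]; [exact Scott_open_const | exact Scott_open_meet | exact Scott_open_bigjoin].
Qed.

Lemma Scott_continuous_Lcontinuous {Y : Type} (eY : Y -> Y -> L) (f : P -> Y) :
  is_Lorder eY -> Scott_continuous e eY f -> Lcontinuous (Scott_open e) (Scott_open eY) f.
Proof.
  intros HY Hf B HB. pose proof (Scott_continuous_mono e eY f He HY Hf) as Hmono. split.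
  - intros x y. eapply fle_trans; [| apply (proj1 HB (f x) (f y))].
    apply fmeet_mono; [apply fle_refl | apply Hmono].
  - intros D s HD Hs. unfold Lpreimage.
    rewrite (proj2 HB _ _ (Limage_directed e eY f D Hmono HD) (Hf D s HD Hs)).
    apply bigjoin_Limage.
Qed.

Hypothesis Hc : Lcontinuous_ordered e.

Lemma spec_Scott_open : spec (Scott_open e) = e.
Proof.
  apply functional_extensionality. intro x. apply functional_extensionality. intro y.
  apply fle_antisym.
  - rewrite (proj2 (Hc x) y). apply Lsub_intro. intro u. unfold Ldown.
    eapply fle_trans; [| apply (wayb_le e He y u)]. apply fimp_adj.
    exact (bigmeet_lb (fun A : {A | Scott_open e A} => proj1_sig A x ⇒ proj1_sig A y)
             (exist _ _ (wayb_Scott_open e He Hc u))).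
  - apply bigmeet_glb. intros [A HA]. apply fimp_intro. rewrite fmeetC. apply (proj1 HA).
Qed.

Lemma point_Scott_open_approx p A : is_point (Scott_open e) p -> Scott_open e A ->
  p A = bigjoin (fun u => p (fun z => wayb e z u) ⊓ A u).
Proof.
  intros Hp HA.
  assert (E : A = fun z => bigjoin (fun u => wayb e z u ⊓ A u)).
  { apply functional_extensionality. intro z. rewrite (Scott_open_wayb_approx e Hc A z HA).
    apply f_equal, functional_extensionality. intro u. apply fmeetC. }
  rewrite E at 1. rewrite (point_bigjoin _ p Hp (fun u z => wayb e z u ⊓ A u)).
  - apply f_equal, functional_extensionality. intro u.
    apply (point_meet_const _ Scott_Ltop p Hp), wayb_Scott_open; assumption.
  - intro u. apply (Ltop_meet_const _ Scott_Ltop), wayb_Scott_open; assumption.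
Qed.

Lemma point_wayb_directed p :
  is_point (Scott_open e) p -> Ldirected e (fun u => p (fun z => wayb e z u)).
Proof.
  intro Hp. pose proof (wayb_Scott_open e He Hc) as Hup. split.
  - apply ftop_eq. rewrite <- (proj2 (proj2 Hp) ftop) at 1.
    rewrite (point_Scott_open_approx p (Lconst ftop) Hp (Scott_open_const ftop)).
    apply bigjoin_mono. intro u. apply fmeet_l.
  - intros a b. rewrite <- (proj1 Hp _ _ (Hup a) (Hup b)).
    rewrite (point_Scott_open_approx p _ Hp (Scott_open_meet _ _ (Hup a) (Hup b))).
    apply bigjoin_mono. intro u.
    apply fmeet_mono; [apply fle_refl | apply fmeet_mono; apply wayb_le; exact He].
Qed.

Hypothesis Hd : Ldcpo e.

Lemma Scott_Lsober : Lsober (Scott_open e).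
Proof.
  split.
  - intros x y H. apply (sup_unique e He (wayb e x)); [apply Hc |].
    replace (wayb e x) with (wayb e y); [apply Hc |].
    apply functional_extensionality. intro u. symmetry. exact (H _ (wayb_Scott_open e He Hc u)).
  - intros p Hp. destruct (Hd _ (point_wayb_directed p Hp)) as [s Hs]. exists s. intros A HA.
    rewrite (point_Scott_open_approx p A Hp HA), (proj2 HA _ s (point_wayb_directed p Hp) Hs).
    apply f_equal, functional_extensionality. intro u. apply fmeetC.
Qed.

End ScottTopology.

Section RoundIdeals.
Context {L : frame} {P : Type} (e : P -> P -> L).
Hypothesis He : is_Lorder e.
Hypothesis Hc : Lcontinuous_ordered e.

Definition round_ideal (I : P -> L) : Prop :=
  Ldirected e I /\ Llower e I /\ (forall x, I x ⊑ bigjoin (fun y => I y ⊓ wayb e y x)).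

Definition RIdeal : Type := {I : P -> L | round_ideal I}.
Definition RI_fun (I : RIdeal) : P -> L := proj1_sig I.
Coercion RI_fun : RIdeal >-> Funclass.

Definition eRI (I J : RIdeal) : L := Lsub I J.

Lemma round_ideal_wayb x : round_ideal (wayb e x).
Proof.
  split; [apply Hc | split]; [intros a y; apply wayb_lower | intro y; apply wayb_interpolation];
    assumption.
Qed.

Definition jRI (x : P) : RIdeal := exist _ (wayb e x) (round_ideal_wayb x).

Lemma RI_ext (I J : RIdeal) : (forall x, I x = J x) -> I = J.
Proof.
  destruct I as [I HI], J as [J HJ]. unfold RI_fun. simpl. intro H.
  assert (E : I = J) by (apply functional_extensionality; exact H).
  subst J. f_equal. apply proof_irrelevance.
Qed.

Lemma RI_directed (I : RIdeal) : Ldirected e I.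
Proof. apply (proj2_sig I). Qed.

Lemma RI_lower (I : RIdeal) x y : I y ⊓ e x y ⊑ I x.
Proof. apply (proj2_sig I). Qed.

Lemma RI_round (I : RIdeal) x : I x ⊑ bigjoin (fun y => I y ⊓ wayb e y x).
Proof. apply (proj2_sig I). Qed.

Lemma eRI_order : is_Lorder eRI.
Proof.
  split; [| split].
  - intro I. apply ftop_eq, Lsub_intro. intro x. apply fmeet_r.
  - intros I J K. apply Lsub_intro. intro x.
    apply (Lsub_apply J); [lattice |]. apply (Lsub_apply I); lattice.
  - intros I J H. apply RI_ext. intro x.
    assert (HIJ : ftop ⊑ eRI I J) by (rewrite <- H; apply fmeet_l).
    assert (HJI : ftop ⊑ eRI J I) by (rewrite <- H; apply fmeet_r).
    apply fle_antisym.
    + apply (Lsub_apply I); [eapply fle_trans; [apply ftop_max | exact HIJ] | apply fle_refl].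
    + apply (Lsub_apply J); [eapply fle_trans; [apply ftop_max | exact HJI] | apply fle_refl].
Qed.

Lemma RI_le_eRI (I : RIdeal) x : I x ⊑ eRI (jRI x) I.
Proof.
  apply Lsub_intro. intro y. eapply fle_trans; [| apply (RI_lower I y x)].
  apply fmeet_mono; [apply fle_refl | apply wayb_le; exact He].
Qed.

Lemma jRI_mono x y : e x y ⊑ eRI (jRI x) (jRI y).
Proof. apply Lsub_intro. intro z. rewrite fmeetC. apply wayb_upper. exact He. Qed.

Lemma RI_image_directed (I : RIdeal) : Ldirected eRI (Limage jRI I).
Proof. exact (Limage_directed e eRI jRI I jRI_mono (RI_directed I)). Qed.

Lemma RI_image_sup (I : RIdeal) : is_sup eRI (Limage jRI I) I.
Proof.
  apply is_sup_Limage. intro K. apply fle_antisym.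
  - apply bigmeet_glb. intro x. apply fimp_intro.
    apply (ord_trans eRI eRI_order _ I); [eapply fle_trans; [apply fmeet_r | apply RI_le_eRI] |].
    lattice.
  - apply Lsub_intro. intro y.
    eapply fle_trans; [apply fmeet_mono; [apply fle_refl | apply RI_round] |].
    apply fmeet_bigjoin_le. intro x. apply (Lsub_apply (wayb e x)); [| lattice].
    apply (fimp_apply (I x)); [| lattice].
    eapply fle_trans; [apply fmeet_l | exact (bigmeet_lb (fun x => I x ⇒ eRI (jRI x) K) x)].
Qed.

Definition RIjoin_fun (D : RIdeal -> L) : P -> L :=
  fun x => bigjoin (fun I : RIdeal => D I ⊓ I x).

Lemma round_ideal_join D : Ldirected eRI D -> round_ideal (RIjoin_fun D).
Proof.
  intro HD. split; [split | split].
  - apply ftop_eq. rewrite <- (proj1 HD). apply bigjoin_least. intro I.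
    rewrite <- (fmeet_top_r (D I)), <- (proj1 (RI_directed I)).
    apply fmeet_bigjoin_le. intro x. apply (le_bigjoin _ _ x), (le_bigjoin _ _ I), fle_refl.
  - intros a b. apply bigjoin_fmeet_le. intro I1. apply fmeet_bigjoin_le. intro I2.
    apply (directed_elim eRI D I1 I2); [exact HD | lattice | lattice |]. intro K.
    apply (directed_elim e K a b); [apply RI_directed | | |].
    + apply (Lsub_apply I1); lattice.
    + apply (Lsub_apply I2); lattice.
    + intro z. apply (le_bigjoin _ _ z). apply fmeet_glb; [| lattice].
      apply (le_bigjoin _ _ K). lattice.
  - intros x y. apply bigjoin_fmeet_le. intro I. apply (le_bigjoin _ _ I).
    apply fmeet_glb; [lattice |]. eapply fle_trans; [| apply (RI_lower I x y)]. lattice.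
  - intro x. apply bigjoin_least. intro I.
    eapply fle_trans; [apply fmeet_mono; [apply fle_refl | apply RI_round] |].
    apply fmeet_bigjoin_le. intro y. apply (le_bigjoin _ _ y).
    apply fmeet_glb; [apply (le_bigjoin _ _ I) |]; lattice.
Qed.

Definition RIjoin D (HD : Ldirected eRI D) : RIdeal :=
  exist _ (RIjoin_fun D) (round_ideal_join D HD).

Lemma RIjoin_sup D HD : is_sup eRI D (RIjoin D HD).
Proof.
  intro K. apply fle_antisym.
  - apply Lsub_intro. intro I. apply Lsub_intro. intro x.
    apply (Lsub_apply (RIjoin D HD)); [lattice |]. apply (le_bigjoin _ _ I). lattice.
  - apply Lsub_intro. intro x. apply fmeet_bigjoin_le. intro I.
    apply (Lsub_apply I); [| lattice]. apply (Lsub_apply D (Ldown eRI K)); lattice.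
Qed.

Lemma RI_dcpo : Ldcpo eRI.
Proof. intros D HD. exists (RIjoin D HD). apply RIjoin_sup. Qed.

Lemma RI_sup_fun D S : Ldirected eRI D -> is_sup eRI D S -> RI_fun S = RIjoin_fun D.
Proof.
  intros HD HS. rewrite (sup_unique eRI eRI_order D S (RIjoin D HD) HS (RIjoin_sup D HD)).
  reflexivity.
Qed.

Definition RIapprox (I J : RIdeal) : L := bigjoin (fun x => I x ⊓ eRI J (jRI x)).

Lemma RIapprox_wayb I J : RIapprox I J ⊑ wayb eRI I J.
Proof.
  apply wayb_intro. intros II S HII HS. apply bigjoin_fmeet_le. intro x.
  apply fle_trans with (((I x ⊓ eRI J (jRI x)) ⊓ eRI I S) ⊓ RIjoin_fun II x).
  { apply fmeet_glb; [apply fle_refl |]. rewrite <- (RI_sup_fun II S (proj1 HII) HS).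
    apply (Lsub_apply I); lattice. }
  apply fmeet_bigjoin_le. intro K. eapply fle_trans; [| apply (proj2 HII J K)].
  apply fmeet_glb; [lattice |]. apply (ord_trans eRI eRI_order _ (jRI x)); [lattice |].
  eapply fle_trans; [| apply RI_le_eRI]. lattice.
Qed.

Lemma RIapprox_directed I : Ldirected eRI (RIapprox I).
Proof.
  split.
  - apply ftop_eq. rewrite <- (proj1 (RI_directed I)). apply bigjoin_le_bigjoin. intro x.
    exists (jRI x). apply (le_bigjoin _ _ x). rewrite (ord_refl eRI eRI_order), fmeet_top_r.
    apply fle_refl.
  - intros J1 J2. apply bigjoin_fmeet_le. intro x1. apply fmeet_bigjoin_le. intro x2.
    apply (directed_elim e I x1 x2); [apply RI_directed | lattice | lattice |]. intro z.
    apply (le_bigjoin _ _ (jRI z)). apply fmeet_glb; [| apply fmeet_glb].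
    + apply (le_bigjoin _ _ z). rewrite (ord_refl eRI eRI_order), fmeet_top_r. lattice.
    + apply (ord_trans eRI eRI_order _ (jRI x1)); [| eapply fle_trans; [| apply jRI_mono]]; lattice.
    + apply (ord_trans eRI eRI_order _ (jRI x2)); [| eapply fle_trans; [| apply jRI_mono]]; lattice.
Qed.

Lemma RIapprox_sup I : is_sup eRI (RIapprox I) I.
Proof.
  intro K. apply fle_antisym.
  - apply Lsub_intro. intro J. apply fmeet_bigjoin_le. intro x.
    apply (ord_trans eRI eRI_order _ (jRI x)); [lattice |].
    apply (ord_trans eRI eRI_order _ I); [eapply fle_trans; [| apply RI_le_eRI] |]; lattice.
  - rewrite (proj1 (is_sup_Limage _ _ _ _) (RI_image_sup I) K).
    apply bigmeet_glb. intro x. apply fimp_intro.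
    apply (Lsub_apply (RIapprox I) (Ldown eRI K) (jRI x)); [lattice |].
    apply (le_bigjoin _ _ x). rewrite (ord_refl eRI eRI_order), fmeet_top_r. lattice.
Qed.

Lemma RI_continuous : Lcontinuous_ordered eRI.
Proof.
  exact (continuous_of_approx eRI eRI_order RIapprox RIapprox_wayb RIapprox_directed RIapprox_sup).
Qed.

Lemma jRI_Scott_continuous : Scott_continuous e eRI jRI.
Proof.
  intros D s HD Hs. apply is_sup_Limage. intro K. apply fle_antisym.
  - apply bigmeet_glb. intro x. apply fimp_intro.
    apply (ord_trans eRI eRI_order _ (jRI s)); [| lattice].
    eapply fle_trans; [apply fmeet_r |].
    eapply fle_trans; [apply (sup_ub e He D s x Hs) | apply jRI_mono].
  - apply Lsub_intro. intro y. unfold RI_fun, jRI. simpl.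
    rewrite (proj2 (wayb_Scott_open e He Hc y) D s HD Hs).
    apply fmeet_bigjoin_le. intro x. apply (Lsub_apply (wayb e x)); [| lattice].
    apply (fimp_apply (D x)); [| lattice].
    eapply fle_trans; [apply fmeet_l | exact (bigmeet_lb (fun x => D x ⇒ eRI (jRI x) K) x)].
Qed.

End RoundIdeals.

Section RoundIdealCompletion.
Context {L : frame} {P : Type} (e : P -> P -> L).
Hypothesis He : is_Lorder e.
Hypothesis Hc : Lcontinuous_ordered e.

Local Notation RI := (RIdeal e).
Local Notation eRI := (eRI e).
Local Notation jRI := (jRI e He Hc).

Section Extension.
Context {M : Type} (eM : M -> M -> L).
Hypothesis HM : is_Lorder eM.
Hypothesis HMd : Ldcpo eM.
Variable f : P -> M.
Hypothesis Hf : Scott_continuous e eM f.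

Lemma RI_image_map_directed (I : RI) : Ldirected eM (Limage f I).
Proof.
  exact (Limage_directed e eM f I (Scott_continuous_mono e eM f He HM Hf) (RI_directed e I)).
Qed.

Definition extension (I : RI) : M :=
  proj1_sig (constructive_indefinite_description _ (HMd _ (RI_image_map_directed I))).

Lemma extension_sup (I : RI) : is_sup eM (Limage f I) (extension I).
Proof.
  exact (proj2_sig (constructive_indefinite_description _ (HMd _ (RI_image_map_directed I)))).
Qed.

Lemma extension_ord (I : RI) m : eM (extension I) m = bigmeet (fun x => I x ⇒ eM (f x) m).
Proof. exact (proj1 (is_sup_Limage _ _ _ _) (extension_sup I) m). Qed.

Lemma extension_Scott_continuous : Scott_continuous eRI eM extension.
Proof.
  intros D S HD HS. apply is_sup_Limage. intro m.
  rewrite extension_ord, (RI_sup_fun e D S HD HS). apply fle_antisym.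
  - apply bigmeet_glb. intro I. apply fimp_intro. rewrite extension_ord.
    apply bigmeet_glb. intro x. apply fimp_intro. apply (fimp_apply (RIjoin_fun e D x)).
    + eapply fle_trans; [apply fmeet_l |]. eapply fle_trans; [apply fmeet_l |].
      exact (bigmeet_lb (fun x => RIjoin_fun e D x ⇒ eM (f x) m) x).
    + apply (le_bigjoin _ _ I). lattice.
  - apply bigmeet_glb. intro x. apply fimp_intro. apply fmeet_bigjoin_le. intro I.
    apply (fimp_apply (I x)); [| lattice]. apply fle_trans with (eM (extension I) m).
    + apply (fimp_apply (D I)); [| lattice].
      eapply fle_trans; [apply fmeet_l |].
      exact (bigmeet_lb (fun I => D I ⇒ eM (extension I) m) I).
    + rewrite extension_ord. exact (bigmeet_lb (fun x => I x ⇒ eM (f x) m) x).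
Qed.

Lemma extension_emb x : extension (jRI x) = f x.
Proof.
  apply (sup_unique eM HM (Limage f (wayb e x))); [apply extension_sup |].
  apply Hf; apply Hc.
Qed.

Lemma extension_unique (g : RI -> M) : Scott_continuous eRI eM g ->
  (forall x, g (jRI x) = f x) -> forall I, g I = extension I.
Proof.
  intros Hg Hgj I. apply (sup_unique eM HM (Limage f I)); [| apply extension_sup].
  replace f with (fun x => g (jRI x)) by (apply functional_extensionality; exact Hgj).
  apply is_sup_Limage_comp, Hg; [apply RI_image_directed | apply RI_image_sup].
Qed.

End Extension.

Lemma RI_directed_completion : is_directed_completion e eRI jRI.
Proof.
  split; [| split; [| split]].
  - apply eRI_order.
  - split; [exact (RI_continuous e He Hc) | apply RI_dcpo].
  - apply jRI_Scott_continuous.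
  - intros M eM HM [_ HMd] f Hf. exists (extension eM HM HMd f Hf).
    split; [| split].
    + apply extension_Scott_continuous.
    + apply extension_emb.
    + apply extension_unique.
Qed.

Lemma RI_Scott_open_extension (A : P -> L) :
  Scott_open eRI (fun I : RI => bigjoin (fun x => I x ⊓ A x)).
Proof.
  apply (Scott_open_intro eRI (eRI_order e)).
  - intros I J. apply bigjoin_fmeet_le. intro x. apply (le_bigjoin _ _ x).
    apply fmeet_glb; [apply (Lsub_apply I) |]; lattice.
  - intros D S HD HS. rewrite (RI_sup_fun e D S HD HS). apply bigjoin_least. intro x.
    apply bigjoin_fmeet_le. intro I. apply (le_bigjoin _ _ I).
    apply fmeet_glb; [apply (le_bigjoin _ _ x) |]; lattice.
Qed.

Section SoberExtension.
Context {Z : Type} (OZ : (Z -> L) -> Prop).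
Hypothesis HZ : Lsober OZ.
Variable f : P -> Z.
Hypothesis Hf : Lcontinuous (Scott_open e) OZ f.

Definition RI_point (I : RI) (C : Z -> L) : L := bigjoin (fun x => I x ⊓ C (f x)).

Lemma RI_point_is_point (I : RI) : is_point OZ (RI_point I).
Proof.
  unfold RI_point. split; [| split].
  - intros C C' HC HC'. apply fle_antisym.
    + apply fmeet_glb; apply bigjoin_mono; intro; lattice.
    + apply bigjoin_fmeet_le. intro x. apply fmeet_bigjoin_le. intro y.
      apply (directed_elim e I x y); [apply RI_directed | lattice | lattice |]. intro z.
      apply (le_bigjoin _ _ z). apply fmeet_glb; [| apply fmeet_glb].
      * lattice.
      * eapply fle_trans; [| apply (proj1 (Hf C HC) x z)]. unfold Lpreimage. lattice.
      * eapply fle_trans; [| apply (proj1 (Hf C' HC') y z)]. unfold Lpreimage. lattice.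
  - intros S HS. apply fle_antisym.
    + apply bigjoin_least. intro x. apply fmeet_bigjoin_le. intros [C HC].
      apply (le_bigjoin _ _ (exist _ C HC)), (le_bigjoin _ _ x), fle_refl.
    + apply bigjoin_least. intros [C HC]. apply bigjoin_mono. intro x.
      apply fmeet_mono; [apply fle_refl | apply (le_bigjoin _ _ (exist _ C HC)), fle_refl].
  - intro a. unfold Lconst. apply fle_antisym.
    + apply bigjoin_least. intro. apply fmeet_r.
    + rewrite <- (fmeet_top_l a) at 1. rewrite <- (proj1 (RI_directed e I)).
      apply bigjoin_fmeet_le. intro x. apply (le_bigjoin _ _ x), fle_refl.
Qed.

Definition sober_extension (I : RI) : Z :=
  proj1_sig (constructive_indefinite_description _ (proj2 HZ _ (RI_point_is_point I))).

Lemma sober_extension_open (I : RI) C : OZ C -> C (sober_extension I) = RI_point I C.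
Proof.
  intro HC. symmetry.
  exact (proj2_sig (constructive_indefinite_description _ (proj2 HZ _ (RI_point_is_point I))) C HC).
Qed.

Lemma sober_extension_continuous : Lcontinuous (Scott_open eRI) OZ sober_extension.
Proof.
  intros C HC. replace (Lpreimage sober_extension C) with (fun I : RI => RI_point I C).
  - apply RI_Scott_open_extension.
  - apply functional_extensionality. intro I. symmetry. apply sober_extension_open, HC.
Qed.

Lemma sober_extension_emb x : sober_extension (jRI x) = f x.
Proof.
  apply (proj1 HZ). intros C HC. rewrite (sober_extension_open _ C HC). unfold RI_point.
  change (C (f x)) with (Lpreimage f C x).
  rewrite (proj2 (Hf C HC) (wayb e x) x (proj1 (Hc x)) (proj2 (Hc x))).
  apply f_equal, functional_extensionality. intro y. apply fmeetC.
Qed.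

Lemma sober_extension_unique (g : RI -> Z) : Lcontinuous (Scott_open eRI) OZ g ->
  (forall x, g (jRI x) = f x) -> forall I, g I = sober_extension I.
Proof.
  intros Hg Hgj I. apply (proj1 HZ). intros C HC. rewrite (sober_extension_open _ C HC).
  change (C (g I)) with (Lpreimage g C I).
  rewrite (proj2 (Hg C HC) _ I (RI_image_directed e He Hc I) (RI_image_sup e He Hc I)).
  unfold Lpreimage, RI_point. rewrite bigjoin_Limage.
  apply f_equal, functional_extensionality. intro x. rewrite Hgj. apply fmeetC.
Qed.

End SoberExtension.

Lemma RI_sobrification : is_Lsobrification (Scott_open e) (Scott_open eRI) jRI.
Proof.
  split; [| split; [| split]].
  - apply Scott_Ltop, eRI_order.
  - apply Scott_Lsober; [apply eRI_order | exact (RI_continuous e He Hc) | apply RI_dcpo].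
  - apply Scott_continuous_Lcontinuous; [exact He | apply eRI_order | apply jRI_Scott_continuous].
  - intros Z OZ _ HZ f Hf. exists (sober_extension OZ HZ f Hf). split; [| split].
    + apply sober_extension_continuous.
    + apply sober_extension_emb.
    + apply sober_extension_unique.
Qed.

End RoundIdealCompletion.

Section OrderIsomorphisms.
Context {L : frame}.

Definition order_iso {A B : Type} (eA : A -> A -> L) (eB : B -> B -> L) (h : A -> B) (k : B -> A) :
  Prop :=
  (forall a, k (h a) = a) /\ (forall b, h (k b) = b) /\ (forall a a', eA a a' = eB (h a) (h a')).

Context {A B : Type} (eA : A -> A -> L) (eB : B -> B -> L) (h : A -> B) (k : B -> A).

Lemma order_iso_sym : order_iso eA eB h k -> order_iso eB eA k h.
Proof.
  intros [kh [hk Hh]]. split; [| split]; [exact hk | exact kh |].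
  intros b b'. rewrite Hh, !hk. reflexivity.
Qed.

Lemma order_iso_surj : order_iso eA eB h k -> forall a, exists b, k b = a.
Proof. intros [kh _] a. exists (h a). apply kh. Qed.

Hypothesis Hiso : order_iso eA eB h k.

Lemma order_iso_order : is_Lorder eB -> is_Lorder eA.
Proof.
  destruct Hiso as [kh [_ Hh]]. intros [Hrefl [Htrans Hanti]]. split; [| split].
  - intro a. rewrite Hh. apply Hrefl.
  - intros a b c. rewrite !Hh. apply Htrans.
  - intros a a' H. rewrite !Hh in H. rewrite <- (kh a), <- (kh a'). f_equal. apply Hanti, H.
Qed.

Lemma order_iso_directed D : Ldirected eA D -> Ldirected eB (fun b => D (k b)).
Proof.
  destruct Hiso as [kh [hk Hh]]. intros [Hne Hdir]. split.
  - unfold Lnonempty. rewrite <- (bigjoin_reindex k D (order_iso_surj Hiso)). exact Hne.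
  - intros b1 b2. eapply fle_trans; [apply Hdir |].
    rewrite (bigjoin_reindex k _ (order_iso_surj Hiso)). apply bigjoin_mono. intro b.
    rewrite !Hh, !hk. apply fle_refl.
Qed.

Lemma order_iso_sup D s : is_sup eA D s -> is_sup eB (fun b => D (k b)) (h s).
Proof.
  destruct (order_iso_sym Hiso) as [_ [_ Hk]]. destruct Hiso as [kh _].
  intros Hs b. rewrite Hk, kh, Hs. unfold Lsub. rewrite (bigmeet_reindex k _ (order_iso_surj Hiso)).
  unfold Ldown. apply f_equal, functional_extensionality. intro b'. rewrite Hk. reflexivity.
Qed.

Lemma order_iso_ideal I : Lideal eA I -> Lideal eB (fun b => I (k b)).
Proof.
  destruct (order_iso_sym Hiso) as [_ [_ Hk]].
  intros [Hd Hl]. split; [apply order_iso_directed, Hd |]. intros x y. rewrite Hk. apply Hl.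
Qed.

Lemma order_iso_Scott_continuous : Scott_continuous eA eB h.
Proof.
  destruct (order_iso_sym Hiso) as [_ [_ Hk]]. destruct Hiso as [kh [hk Hh]].
  intros D s _ Hs. apply is_sup_Limage. intro b. rewrite Hk, kh, Hs. unfold Lsub, Ldown.
  apply f_equal, functional_extensionality. intro a. rewrite Hh, hk. reflexivity.
Qed.

End OrderIsomorphisms.

Section OrderIsoTransport.
Context {L : frame} {A B : Type} (eA : A -> A -> L) (eB : B -> B -> L) (h : A -> B) (k : B -> A).
Hypothesis Hiso : order_iso eA eB h k.

Lemma order_iso_wayb x y : wayb eA x y = wayb eB (h x) (h y).
Proof.
  pose proof (order_iso_sym _ _ _ _ Hiso) as Hiso'. destruct Hiso as [kh [hk Hh]].
  apply fle_antisym; apply wayb_intro.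
  - intros J t HJ Ht.
    pose proof (wayb_elim eA _ _ x y (order_iso_ideal _ _ _ _ Hiso' J HJ)
                  (order_iso_sup _ _ _ _ Hiso' J t Ht)) as H.
    cbv beta in H. rewrite Hh, hk in H. exact H.
  - intros I s HI Hs.
    pose proof (wayb_elim eB _ _ (h x) (h y) (order_iso_ideal _ _ _ _ Hiso I HI)
                  (order_iso_sup _ _ _ _ Hiso I s Hs)) as H.
    cbv beta in H. rewrite <- Hh, kh in H. exact H.
Qed.

Lemma order_iso_continuous : Lcontinuous_ordered eB -> Lcontinuous_ordered eA.
Proof.
  pose proof (order_iso_sym _ _ _ _ Hiso) as Hiso'. intros Hc a.
  replace (wayb eA a) with (fun y => wayb eB (h a) (h y))
    by (apply functional_extensionality; intro; symmetry; apply order_iso_wayb).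
  split.
  - apply (order_iso_directed _ _ _ _ Hiso'), Hc.
  - pose proof (order_iso_sup _ _ _ _ Hiso' _ _ (proj2 (Hc (h a)))) as H.
    rewrite (proj1 Hiso) in H. exact H.
Qed.

Lemma order_iso_dcpo : Ldcpo eB -> Ldcpo eA.
Proof.
  pose proof (order_iso_sym _ _ _ _ Hiso) as Hiso'. intros Hd D HD.
  destruct (Hd _ (order_iso_directed _ _ _ _ Hiso D HD)) as [t Ht]. exists (k t).
  pose proof (order_iso_sup _ _ _ _ Hiso' _ t Ht) as H. cbv beta in H.
  replace (fun a => D (k (h a))) with D in H
    by (apply functional_extensionality; intro; rewrite (proj1 Hiso); reflexivity).
  exact H.
Qed.

End OrderIsoTransport.

Section Universality.
Context {L : frame}.

Lemma sobrification_endo_id {X Y : Type} (OX : (X -> L) -> Prop) (OY : (Y -> L) -> Prop)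
  (j : X -> Y) (g : Y -> Y) :
  is_Lsobrification OX OY j -> Lcontinuous OY OY g -> (forall x, g (j x) = j x) ->
  forall y, g y = y.
Proof.
  intros [HYt [HYs [HYj HYu]]] Hg Hgj y.
  destruct (HYu _ OY HYt HYs j HYj) as [fb [_ [_ Hu]]].
  rewrite (Hu g Hg Hgj y). symmetry.
  apply (Hu (fun y => y)); [intros B HB; exact HB | reflexivity].
Qed.

Lemma sobrification_unique {X Y Y0 : Type} (OX : (X -> L) -> Prop) (OY : (Y -> L) -> Prop)
  (O0 : (Y0 -> L) -> Prop) (j : X -> Y) (j0 : X -> Y0) :
  is_Lsobrification OX OY j -> is_Lsobrification OX O0 j0 ->
  exists (h : Y -> Y0) (k : Y0 -> Y), Lcontinuous OY O0 h /\ Lcontinuous O0 OY k /\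
    (forall x, h (j x) = j0 x) /\ (forall y, k (h y) = y) /\ (forall y, h (k y) = y).
Proof.
  intros HY H0. pose proof HY as [HYt [HYs [HYj HYu]]]. pose proof H0 as [H0t [H0s [H0j H0u]]].
  destruct (HYu _ O0 H0t H0s j0 H0j) as [h [Hh [Hhj _]]].
  destruct (H0u _ OY HYt HYs j HYj) as [k [Hk [Hkj _]]].
  exists h, k. split; [exact Hh | split; [exact Hk | split; [exact Hhj | split]]].
  - apply (sobrification_endo_id OX OY j (fun y => k (h y)) HY).
    { intros B HB. exact (Hh _ (Hk B HB)). }
    intro x. rewrite Hhj. apply Hkj.
  - apply (sobrification_endo_id OX O0 j0 (fun y => h (k y)) H0).
    { intros B HB. exact (Hk _ (Hh B HB)). }
    intro x. rewrite Hkj. apply Hhj.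
Qed.

Lemma directed_completion_endo_id {P Q : Type} (eP : P -> P -> L) (eQ : Q -> Q -> L)
  (j : P -> Q) (g : Q -> Q) :
  is_directed_completion eP eQ j -> Scott_continuous eQ eQ g -> (forall x, g (j x) = j x) ->
  forall y, g y = y.
Proof.
  intros [HQo [HQc [HQj HQu]]] Hg Hgj y.
  destruct (HQu _ eQ HQo HQc j HQj) as [fb [_ [_ Hu]]].
  rewrite (Hu g Hg Hgj y). symmetry.
  apply (Hu (fun y => y)); [apply Scott_continuous_id | reflexivity].
Qed.

Lemma directed_completion_unique {P Q Q0 : Type} (eP : P -> P -> L) (eQ : Q -> Q -> L)
  (e0 : Q0 -> Q0 -> L) (j : P -> Q) (j0 : P -> Q0) :
  is_directed_completion eP eQ j -> is_directed_completion eP e0 j0 ->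
  exists (h : Q -> Q0) (k : Q0 -> Q), Scott_continuous eQ e0 h /\ Scott_continuous e0 eQ k /\
    (forall x, h (j x) = j0 x) /\ (forall y, k (h y) = y) /\ (forall y, h (k y) = y).
Proof.
  intros HQ H0. pose proof HQ as [HQo [HQc [HQj HQu]]]. pose proof H0 as [H0o [H0c [H0j H0u]]].
  destruct (HQu _ e0 H0o H0c j0 H0j) as [h [Hh [Hhj _]]].
  destruct (H0u _ eQ HQo HQc j HQj) as [k [Hk [Hkj _]]].
  exists h, k. split; [exact Hh | split; [exact Hk | split; [exact Hhj | split]]].
  - apply (directed_completion_endo_id eP eQ j (fun y => k (h y)) HQ).
    { apply (Scott_continuous_comp eQ e0 eQ); assumption. }
    intro x. rewrite Hhj. apply Hkj.
  - apply (directed_completion_endo_id eP e0 j0 (fun y => h (k y)) H0).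
    { apply (Scott_continuous_comp e0 eQ e0); assumption. }
    intro x. rewrite Hkj. apply Hhj.
Qed.

Lemma sobrification_transport {X Y Y0 : Type} (OX : (X -> L) -> Prop) (OY : (Y -> L) -> Prop)
  (O0 : (Y0 -> L) -> Prop) (j : X -> Y) (j0 : X -> Y0) (h : Y -> Y0) (k : Y0 -> Y) :
  is_Lsobrification OX O0 j0 -> is_Ltop OY -> Lsober OY ->
  Lcontinuous OY O0 h -> Lcontinuous O0 OY k -> (forall y, k (h y) = y) ->
  (forall x, h (j x) = j0 x) -> is_Lsobrification OX OY j.
Proof.
  intros [_ [_ [H0j H0u]]] HYt HYs Hh Hk kh hj.
  assert (Hj : forall x, k (j0 x) = j x) by (intro x; rewrite <- hj; apply kh).
  split; [exact HYt | split; [exact HYs | split]].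
  - intros B HB. replace (Lpreimage j B) with (Lpreimage j0 (Lpreimage k B)).
    + exact (H0j _ (Hk B HB)).
    + apply functional_extensionality. intro x. unfold Lpreimage. rewrite Hj. reflexivity.
  - intros Z OZ HZt HZs f Hf. destruct (H0u Z OZ HZt HZs f Hf) as [fb [Hfb [Hfbj Hu]]].
    exists (fun y => fb (h y)). split; [| split].
    + intros C HC. exact (Hh _ (Hfb C HC)).
    + intro x. rewrite hj. apply Hfbj.
    + intros g Hg Hgj y. rewrite <- (kh y) at 1. apply (Hu (fun y0 => g (k y0))).
      * intros C HC. exact (Hk _ (Hg C HC)).
      * intro x. rewrite Hj. apply Hgj.
Qed.

Lemma directed_completion_transport {P Q Q0 : Type} (eP : P -> P -> L) (eQ : Q -> Q -> L)
  (e0 : Q0 -> Q0 -> L) (j : P -> Q) (j0 : P -> Q0) (h : Q -> Q0) (k : Q0 -> Q) :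
  is_Lorder eP -> is_directed_completion eP e0 j0 -> is_Lorder eQ -> Lcontinuous_dcpo eQ ->
  Scott_continuous eQ e0 h -> Scott_continuous e0 eQ k -> (forall y, k (h y) = y) ->
  (forall x, h (j x) = j0 x) -> is_directed_completion eP eQ j.
Proof.
  intros HP [H0o [_ [H0j H0u]]] HQo HQc Hh Hk kh hj.
  assert (Hj : forall x, k (j0 x) = j x) by (intro x; rewrite <- hj; apply kh).
  split; [exact HQo | split; [exact HQc | split]].
  - replace j with (fun x => k (j0 x)) by (apply functional_extensionality; exact Hj).
    apply (Scott_continuous_comp eP e0 eQ); assumption.
  - intros M eM HM HMc f Hf. destruct (H0u M eM HM HMc f Hf) as [fb [Hfb [Hfbj Hu]]].
    exists (fun y => fb (h y)). split; [| split].
    + apply (Scott_continuous_comp eQ e0 eM); assumption.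
    + intro x. rewrite hj. apply Hfbj.
    + intros g Hg Hgj y. rewrite <- (kh y) at 1. apply (Hu (fun y0 => g (k y0))).
      * apply (Scott_continuous_comp e0 eQ eM); assumption.
      * intro x. rewrite Hj. apply Hgj.
Qed.

Lemma spec_homeomorphism {Y Y0 : Type} (OY : (Y -> L) -> Prop) (O0 : (Y0 -> L) -> Prop)
  (h : Y -> Y0) (k : Y0 -> Y) :
  Lcontinuous OY O0 h -> Lcontinuous O0 OY k -> (forall y, k (h y) = y) ->
  forall a b, spec OY a b = spec O0 (h a) (h b).
Proof.
  intros Hh Hk kh a b. apply fle_antisym; apply bigmeet_glb.
  - intros [B HB]. apply (bigmeet_le _ _ (exist OY (Lpreimage h B) (Hh B HB))), fle_refl.
  - intros [A HA]. apply (bigmeet_le _ _ (exist O0 (Lpreimage k A) (Hk A HA))). simpl.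
    unfold Lpreimage. rewrite !kh. apply fle_refl.
Qed.

End Universality.

Section Completions.
Context {L : frame} {P : Type} (eP : P -> P -> L).
Hypothesis HP : is_Lorder eP.
Hypothesis HPc : Lcontinuous_ordered eP.

Lemma sobrification_directed_completion {Y : Type} (OY : (Y -> L) -> Prop) (j : P -> Y) :
  is_Lsobrification (Scott_open eP) OY j -> is_directed_completion eP (spec OY) j.
Proof.
  intro HY. pose proof (RI_directed_completion eP HP HPc) as HRI.
  destruct (sobrification_unique _ _ _ j _ HY (RI_sobrification eP HP HPc))
    as (h & k & Hh & Hk & hj & kh & hk).
  assert (Hiso : order_iso (spec OY) (eRI eP) h k).
  { split; [exact kh | split; [exact hk |]]. intros a b.
    rewrite (spec_homeomorphism OY _ h k Hh Hk kh), spec_Scott_open;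
      [reflexivity | apply eRI_order | exact (RI_continuous eP HP HPc)]. }
  apply (directed_completion_transport eP (spec OY) (eRI eP) j _ h k HP HRI).
  - exact (order_iso_order _ _ _ _ Hiso (eRI_order eP)).
  - split; [apply (order_iso_continuous _ _ _ _ Hiso) | apply (order_iso_dcpo _ _ _ _ Hiso)];
      apply HRI.
  - exact (order_iso_Scott_continuous _ _ _ _ Hiso).
  - exact (order_iso_Scott_continuous _ _ _ _ (order_iso_sym _ _ _ _ Hiso)).
  - exact kh.
  - exact hj.
Qed.

Lemma directed_completion_sobrification {Q : Type} (eQ : Q -> Q -> L) (j : P -> Q) :
  is_directed_completion eP eQ j -> is_Lsobrification (Scott_open eP) (Scott_open eQ) j.
Proof.
  intro HQ. pose proof HQ as [HQo [[HQc HQd] _]].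
  destruct (directed_completion_unique _ _ _ j _ HQ (RI_directed_completion eP HP HPc))
    as (h & k & Hh & Hk & hj & kh & _).
  apply (sobrification_transport _ _ _ j _ h k (RI_sobrification eP HP HPc)).
  - exact (Scott_Ltop eQ HQo).
  - exact (Scott_Lsober eQ HQo HQc HQd).
  - exact (Scott_continuous_Lcontinuous eQ HQo (eRI eP) h (eRI_order eP) Hh).
  - exact (Scott_continuous_Lcontinuous (eRI eP) (eRI_order eP) eQ k HQo Hk).
  - exact kh.
  - exact hj.
Qed.

End Completions.

Theorem theorem6p6 (L : frame) (P : Type) (eP : P -> P -> L)
  (Q : Type) (eQ : Q -> Q -> L) :
  is_Lorder eP -> Lcontinuous_ordered eP ->
  is_Lorder eQ -> Lcontinuous_ordered eQ ->
  (* (1) *)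
  (forall (Y : Type) (OY : (Y -> L) -> Prop) (j : P -> Y),
     is_Lsobrification (Scott_open eP) OY j ->
     is_directed_completion eP (spec OY) j) /\
  (* (2) *)
  (forall j : P -> Q, is_directed_completion eP eQ j ->
     is_Lsobrification (Scott_open eP) (Scott_open eQ) j) /\
  (* (3) *)
  (forall j : P -> Q, is_directed_completion eP eQ j <->
     is_Lsobrification (Scott_open eP) (Scott_open eQ) j).
Proof.
  intros HP HPc HQ HQc. split; [| split].
  - intros Y OY j. apply sobrification_directed_completion; assumption.
  - intro j. apply directed_completion_sobrification; assumption.
  - intro j. split; [apply directed_completion_sobrification; assumption |].
    intro HS. rewrite <- (spec_Scott_open eQ HQ HQc).
    apply sobrification_directed_completion; assumption.
Qed.
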